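(* Let $n$, $k$, $t$ be positive integers with $k\geq t+1$ and $n\geq 2k$, and let $V$ be an $n$-dimensional vector space over $\mathbb{F}_q$. Suppose $\mathcal{F}\subseteq{V\brack k}$ is an almost $t$-intersecting family with $\tau_t(\mathcal{F})<k$ which has a unique $t$-cover $T$ of dimension $\tau_t(\mathcal{F})$. If $A$ is a subspace of $V$ with $\dim(A)<\tau_t(\mathcal{F})$ and $\dim(A\cap T)\geq t$, then $$|(\mathcal{F}\setminus\mathcal{F}_T)_A|\leq{k-t+1\brack 1}^{\tau_t(\mathcal{F})-\dim(A)+1}{n-\tau_t(\mathcal{F})-1\brack k-\tau_t(\mathcal{F})-1}+\sum_{i=0}^{\tau_t(\mathcal{F})-\dim(A)}{k-t+1\brack 1}^{i}.$$
   Context: $q$ is a prime power; ${W\brack k}$ is the set of $k$-dimensional subspaces of $W$ and ${m\brack r}$ the Gaussian binomial coefficient $\prod_{i=0}^{r-1}\frac{q^{m-i}-1}{q^{r-i}-1}$ (equal to $1$ for $r=0$). A family $\mathcal{F}\subseteq{V\brack k}$ is almost $t$-intersecting if for each $F\in\mathcal{F}$ there is at most one $F'\in\mathcal{F}$ with $\dim(F\cap F')<t$. A subspace $W$ is a $t$-cover of $\mathcal{F}$ if $\dim(W\cap F)\geq t$ for all $F\in\mathcal{F}$; $\tau_t(\mathcal{F})$ is the minimum dimension of a $t$-cover of $\mathcal{F}$. For a family $\mathcal{B}$ and subspace $A$, $\mathcal{B}_A=\{F\in\mathcal{B}: A\subseteq F\}$. *)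

From HB Require Import structures.
From mathcomp Require Import all_boot all_order all_algebra all_field.
Set Implicit Arguments. Unset Strict Implicit. Unset Printing Implicit Defensive.
Import GRing.Theory.
Local Open Scope ring_scope.

Section FinVspace.
Import VectorInternalTheory.
Variables (F : finFieldType) (vT : vectType F).
HB.instance Definition _ := [Countable of {vspace vT} by <:].
HB.instance Definition _ := [Finite of {vspace vT} by <:].
End FinVspace.

Definition gbin (q m r : nat) : rat :=
  \prod_(i < r) (((q ^ (m - i))%:R - 1) / ((q ^ (r - i))%:R - 1)).

Section Families.
Variables (F : finFieldType) (vT : vectType F).

Definition almost_t_intersecting (t : nat) (fam : {set {vspace vT}}) : Prop :=
  forall X, X \in fam -> (#|[set Y in fam | (\dim (X :&: Y)%VS < t)%N]| <= 1)%N.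

Definition t_cover (t : nat) (fam : {set {vspace vT}}) (W : {vspace vT}) : bool :=
  [forall X in fam, (t <= \dim (W :&: X)%VS)%N].

Definition tau (t : nat) (fam : {set {vspace vT}}) : nat :=
  \big[minn/(\dim (fullv : {vspace vT}))]_(W : {vspace vT} | t_cover t fam W) \dim W.

Definition fam_minus_T_A (fam : {set {vspace vT}}) (T A : {vspace vT}) :=
  [set X in fam | ~~ (T <= X)%VS & (A <= X)%VS].
End Families.

From HB Require Import structures.
From mathcomp Require Import all_boot all_order all_algebra all_field.
From mathcomp Require Import zify.
Set Implicit Arguments. Unset Strict Implicit. Unset Printing Implicit Defensive.
Import Order.TTheory GRing.Theory Num.Theory.
Local Open Scope ring_scope.

(** Induction on [tau - dim A], downwards from [dim A = tau + 1].  If [A] is not a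
    [t]-cover, some [F0] in the family meets [A] in dimension [< t], so [F0] contains a
    [(k - t + 1)]-space [Z] with [A :&: Z = 0].  Every member [Y] of [(F \ F_T)_A], except
    the at most one member meeting [F0] in dimension [< t], meets [Z] nontrivially
    (as [dim (F0 :&: Y) + dim Z > k = dim F0]), hence contains [A + L] for one of the
    [c = [k-t+1 brack 1]] lines [L] of [Z].  So [|(F \ F_T)_A| <= 1 + c M] when [M]
    bounds the families of all [(dim A + 1)]-spaces through [A].  A space of dimension
    [<= tau] other than [T] is not a [t]-cover (minimality of [tau], uniqueness of [T]),
    and [(F \ F_T)_T] is empty.  At dimension [tau + 1] the family lies among the
    [[n-tau-1 brack k-tau-1]] [k]-spaces through the given space, and iterating
    [x |-> 1 + c x] from this bound gives the closed form. *)

Lemma iter_affine (R : pzRingType) (c x : R) a :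
  iter a (fun y => 1 + c * y) x = c ^+ a * x + \sum_(i < a) c ^+ i.
Proof.
elim: a => [|a /= ->]; first by rewrite expr0 mul1r big_ord0 addr0.
rewrite big_ord_recl expr0 mulrDr mulrA -exprS mulr_sumr addrCA.
by under eq_bigr do rewrite -exprS.
Qed.

Lemma leq_card_bigcup (I T : finType) (P : pred I) (f : I -> {set T}) :
  (#|\bigcup_(i | P i) f i| <= \sum_(i | P i) #|f i|)%N.
Proof.
apply: (big_ind2 (fun (A : {set T}) n => #|A| <= n)%N) => [|A1 n1 A2 n2 h1 h2|//].
  by rewrite cards0.
exact: leq_trans (leq_card_setU A1 A2) (leq_add h1 h2).
Qed.

Lemma double_count (I J : finType) (A : {pred I}) (B : {pred J}) (R : I -> J -> bool) :
  (\sum_(i in A) #|[set j in B | R i j]| = \sum_(j in B) #|[set i in A | R i j]|)%N.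
Proof.
have card_sum (K : finType) (C : {pred K}) (S : pred K) :
    (#|[set x in C | S x]| = \sum_(x in C) S x)%N.
  by rewrite -sum1dep_card big_mkcondr; apply: eq_bigr => x _; case: (S x).
under eq_bigr do rewrite card_sum.
under [RHS]eq_bigr do rewrite card_sum.
exact: exchange_big.
Qed.

Section GaussianBinomial.
Variable q : nat.
Hypothesis q_gt1 : (1 < q)%N.

Lemma gbin0 m : gbin q m 0 = 1.
Proof. by rewrite /gbin big_ord0. Qed.

Lemma gbin1 m : gbin q m 1 = ((q ^ m)%:R - 1) / (q%:R - 1).
Proof. by rewrite /gbin big_ord1 !subn0 expn1. Qed.

Lemma gbin_ge0 m r : 0 <= gbin q m r.
Proof.
apply: prodr_ge0 => i _; apply: divr_ge0;
  by rewrite subr_ge0 ler1n expn_gt0 ltnW.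
Qed.

Lemma expnS_subr1_neq0 r : ((q ^ r.+1)%:R - 1 : rat) != 0.
Proof. by rewrite subr_eq0 pnatr_eq1 -(exp1n r.+1) eqn_exp2r // gtn_eqF. Qed.

Lemma gbin1_neq0 r : gbin q r.+1 1 != 0.
Proof.
have := expnS_subr1_neq0 0; rewrite expn1 => q_subr1_neq0.
by rewrite gbin1 mulf_neq0 ?invr_neq0 ?expnS_subr1_neq0.
Qed.

Lemma gbinS m r : gbin q m r.+1 * gbin q r.+1 1 = gbin q m 1 * gbin q m.-1 r.
Proof.
rewrite /gbin big_ord_recl !big_ord1 !subn0 expn1.
under eq_bigr do rewrite lift0 subSS subnS predn_sub.
by rewrite mulrAC -!mulrA mulKf ?expnS_subr1_neq0 // !mulrA.
Qed.

End GaussianBinomial.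

Section Subspaces.
Variables (K : fieldType) (vT : vectType K).
Implicit Types A U V W X Z : {vspace vT}.

Lemma dimv_add_line U (v : vT) : v \notin U -> \dim (U + <[v]>) = (\dim U).+1.
Proof.
move=> vNU; apply/eqP; rewrite eqn_leq; apply/andP; split.
  by have := dimv_sum_cap U <[v]>; rewrite dim_vline; case: (v != 0); lia.
have /ltn_leqif-> := dimv_leqif_sup (addvSl U <[v]>).
by apply: contra vNU => /subvP; apply; rewrite memvE addvSr.
Qed.

Lemma eq_addv_line U V (v : vT) : (U <= V)%VS -> \dim V = (\dim U).+1 ->
  v \in V -> v \notin U -> V = (U + <[v]>)%VS.
Proof.
move=> sUV dimV vV vNU; apply/eqP; rewrite eq_sym eqEdim dimv_add_line // dimV.
by rewrite subv_add sUV -memvE vV /=.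
Qed.

Lemma exists_subv_dim U m : (m <= \dim U)%N -> exists2 Z, (Z <= U)%VS & \dim Z = m.
Proof.
elim: m => [|m IHm] leUm; first by exists 0%VS; rewrite ?sub0v ?dimv0.
have [Z sZU dimZ] := IHm (ltnW leUm).
have /subvPn[u uU uNZ] : ~~ (U <= Z)%VS.
  by apply: contraL leUm => /dimvS; rewrite dimZ -ltnNge.
by exists (Z + <[u]>)%VS; rewrite ?dimv_add_line ?dimZ // subv_add sZU -memvE.
Qed.

Lemma exists_subv_capv0_dim U A m : (m + \dim (U :&: A) <= \dim U)%N ->
  exists Z, [/\ (Z <= U)%VS, (A :&: Z = 0)%VS & \dim Z = m].
Proof.
move=> dimU; have [Z sZ dimZ] : exists2 Z, (Z <= U :\: A)%VS & \dim Z = m.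
  by apply: exists_subv_dim; have := dimv_cap_compl U A; lia.
exists Z; split=> //; first exact: subv_trans sZ (diffvSl U A).
by apply/eqP; rewrite -subv0 -(capv_diff U A) capvC capvS.
Qed.

Lemma dimv_cap_gt0 W X Z : (X <= W)%VS -> (Z <= W)%VS ->
  (\dim W < \dim X + \dim Z)%N -> (0 < \dim (X :&: Z))%N.
Proof.
move=> sXW sZW; rewrite -dimv_sum_cap.
have sXZW : (X + Z <= W)%VS by rewrite subv_add sXW sZW.
by have := dimvS sXZW; lia.
Qed.

End Subspaces.

Section Counting.
Variables (F : finFieldType) (vT : vectType F).
Local Notation fvT := (finvect_type vT).
Local Notation q := #|F|.
Implicit Types U V W X : {vspace vT}.

Definition vspaces_between U W r :=
  [set X | (U <= X)%VS && (X <= W)%VS && (\dim X == \dim U + r)%N].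

Lemma card_memv U : #|[pred v : fvT | (v : vT) \in U]| = (q ^ \dim U)%N.
Proof.
(* [card_vspace] needs [vT] in the form [Vector.Pack cvT] over a finType carrier. *)
case: vT U => T cvT U.
exact: (card_vspace (U : {vspace finvect_type (Vector.Pack cvT)})).
Qed.

Lemma card_memv_diff U W : (U <= W)%VS ->
  #|[set v : fvT | ((v : vT) \in W) && ((v : vT) \notin U)]| = (q ^ \dim W - q ^ \dim U)%N.
Proof.
move=> sUW; set inU := [pred v : fvT | (v : vT) \in U].
rewrite -!card_memv -[X in (_ = X - _)%N](cardID inU).
have /eq_card-> : [predI [pred v : fvT | (v : vT) \in W] & inU] =i inU.
  by move=> v; rewrite !inE andb_idl //; apply: (subvP sUW).
by rewrite addKn; apply: eq_card => v; rewrite !inE andbC.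
Qed.

Lemma card_vspaces_between1_nat U W : (U <= W)%VS ->
  (#|vspaces_between U W 1| * (q ^ (\dim U).+1 - q ^ \dim U) = q ^ \dim W - q ^ \dim U)%N.
Proof.
move=> sUW; rewrite -(card_memv_diff sUW) -sum_nat_const.
set D := [set v : fvT | _]; set Ls := vspaces_between U W 1.
have lines_through v :
    v \in D -> [set L in Ls | (v : vT) \in L] = [set (U + <[v : vT]>)%VS].
  rewrite inE => /andP[vW vNU]; apply/setP => L; rewrite !inE addn1.
  apply/idP/eqP => [/andP[/andP[/andP[sUL _] /eqP dimL] vL] | ->].
    exact: eq_addv_line.
  by rewrite addvSl subv_add sUW -memvE vW dimv_add_line // eqxx memvE addvSr.
have card_on_line L : L \in Ls ->
    #|[set v in D | (v : vT) \in L]| = (q ^ (\dim U).+1 - q ^ \dim U)%N.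
  rewrite inE addn1 => /andP[/andP[sUL sLW] /eqP <-].
  rewrite -(card_memv_diff sUL); apply: eq_card => v; rewrite !inE.
  by apply/idP/idP => [/andP[/andP[_ ->] ->] | /andP[vL ->]] //; rewrite (subvP sLW).
rewrite -(eq_bigr _ card_on_line) -double_count -sum1_card.
by apply: eq_bigr => v vD; rewrite lines_through // cards1.
Qed.

Lemma card_vspaces_between1 U W : (U <= W)%VS ->
  (#|vspaces_between U W 1|%:R : rat) = gbin q (\dim W - \dim U) 1.
Proof.
move=> sUW; have q_gt0 : (0 < q)%N by rewrite ltnW ?finNzRing_gt1.
have cardE : (#|vspaces_between U W 1| * (q - 1) = q ^ (\dim W - \dim U) - 1)%N.
  apply/eqP; rewrite -(@eqn_pmul2l (q ^ \dim U)) ?expn_gt0 ?q_gt0 //.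
  apply/eqP; rewrite mulnCA mulnBr muln1 -expnSr [RHS]mulnBr muln1 -expnD subnKC ?dimvS //.
  exact: card_vspaces_between1_nat.
have q_subr1_neq0 : q%:R - 1 != 0 :> rat.
  by rewrite subr_eq0 pnatr_eq1 gtn_eqF ?finNzRing_gt1.
rewrite gbin1; apply: (mulIf q_subr1_neq0); rewrite divfK //.
by have := congr1 (GRing.natmul (1 : rat)) cardE; rewrite natrM !natrB ?expn_gt0 ?q_gt0.
Qed.

Lemma card_vspaces_between U W r : (U <= W)%VS ->
  (#|vspaces_between U W r|%:R : rat) = gbin q (\dim W - \dim U) r.
Proof.
elim: r U => [|r IHr] U sUW.
  suff -> : vspaces_between U W 0 = [set U] by rewrite cards1 gbin0.
  apply/setP => X; rewrite !inE addn0.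
  apply/idP/eqP => [/andP[/andP[sUX _] /eqP dimX] | ->]; last by rewrite subvv sUW eqxx.
  by apply/eqP; rewrite eq_sym eqEdim sUX dimX leqnn.
set Xs := vspaces_between U W r.+1; set Ls := vspaces_between U W 1.
have lines_below X : X \in Xs -> [set L in Ls | (L <= X)%VS] = vspaces_between U X 1.
  rewrite inE => /andP[/andP[_ sXW] _]; apply/setP => L; rewrite !inE.
  apply/idP/idP => [/andP[/andP[/andP[-> _] ->] ->] // | /andP[/andP[-> sLX] ->]].
  by rewrite sLX (subv_trans sLX sXW).
have spaces_above L : L \in Ls -> [set X in Xs | (L <= X)%VS] = vspaces_between L W r.
  rewrite inE => /andP[/andP[sUL _] /eqP dimL]; apply/setP => X.
  rewrite !inE dimL addn1 addSnnS.
  apply/idP/idP => [/andP[/andP[/andP[_ ->] ->] ->] // | /andP[/andP[sLX ->] ->]].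
  by rewrite sLX (subv_trans sUL sLX).
have := double_count Xs Ls (fun X L => (L <= X)%VS).
under eq_bigr => X XXs do rewrite lines_below //.
under [RHS]eq_bigr => L LLs do rewrite spaces_above //.
move/(congr1 (GRing.natmul (1 : rat))); rewrite !natr_sum.
under eq_bigr => X XXs.
  move: XXs; rewrite inE => /andP[/andP[sUX _] /eqP dimX].
  rewrite card_vspaces_between1 // dimX addKn; over.
under [RHS]eq_bigr => L LLs.
  move: LLs; rewrite inE => /andP[/andP[_ sLW] /eqP dimL].
  rewrite IHr // dimL addn1 subnS; over.
rewrite !sumr_const => cardE.
apply: (mulIf (gbin1_neq0 (finNzRing_gt1 F) r)).
by rewrite mulr_natl cardE -mulr_natl (card_vspaces_between1 sUW) gbinS ?finNzRing_gt1.
Qed.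
End Counting.

Section Families.
Variables (F : finFieldType) (vT : vectType F).
Local Notation q := #|F|.
Implicit Types (fam : {set {vspace vT}}) (T A B W Z : {vspace vT}).

Lemma tau_min t fam W : t_cover t fam W -> (tau t fam <= \dim W)%N.
Proof.
move=> coverW; rewrite /tau -minEnat.
exact: (bigmin_le_cond _ (fun W => \dim W) coverW).
Qed.

Lemma fam_minus_T_A_sub t fam T A (F0 : {vspace vT}) Z :
  (Z <= F0)%VS -> (\dim F0 < \dim Z + t)%N ->
  fam_minus_T_A fam T A \subset [set Y in fam | (\dim (F0 :&: Y) < t)%N]
    :|: \bigcup_(L in vspaces_between 0 Z 1) fam_minus_T_A fam T (A + L).
Proof.
move=> sZF0 dimZ; apply/subsetP => Y; rewrite inE => /and3P[famY TNY sAY].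
rewrite inE; case: (ltnP (\dim (F0 :&: Y)) t) => [small | large].
  by rewrite inE famY small.
have : (0 < \dim ((F0 :&: Y) :&: Z))%N.
  by apply: dimv_cap_gt0 (capvSl F0 Y) sZF0 _; lia.
rewrite lt0n dimv_eq0 -vpick0 => pick_neq0.
have := memv_pick ((F0 :&: Y) :&: Z)%VS; set y := vpick _.
rewrite !memv_cap => /andP[/andP[_ yY] yZ].
apply/orP; right; apply/bigcupP; exists <[y]>%VS.
  by rewrite inE sub0v -memvE yZ dimv0 dim_vline pick_neq0.
by rewrite inE famY TNY subv_add sAY -memvE yY.
Qed.

Lemma card_fam_minus_T_A_rec k t fam T A (M : rat) :
  (t < k)%N -> (forall X, X \in fam -> \dim X = k) -> almost_t_intersecting t fam ->
  ~~ t_cover t fam A ->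
  (forall B, (A <= B)%VS -> \dim B = (\dim A).+1 -> #|fam_minus_T_A fam T B|%:R <= M) ->
  #|fam_minus_T_A fam T A|%:R <= 1 + gbin q (k - t + 1) 1 * M.
Proof.
move=> t_lt_k dim_fam almost_t /forallPn[F0]; rewrite negb_imply -ltnNge.
move=> /andP[famF0 small] boundB.
have [Z [sZF0 capAZ dimZ]] : exists Z, [/\ (Z <= F0)%VS, (A :&: Z = 0)%VS
    & \dim Z = (k - t + 1)%N].
  by apply: exists_subv_capv0_dim; rewrite capvC (dim_fam F0 famF0); lia.
set Ls := vspaces_between 0 Z 1.
have dimF0 : (\dim F0 < \dim Z + t)%N by rewrite (dim_fam F0 famF0) dimZ; lia.
have cover := @fam_minus_T_A_sub t fam T A F0 Z sZF0 dimF0.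
have card_le : (#|fam_minus_T_A fam T A|
    <= 1 + \sum_(L in Ls) #|fam_minus_T_A fam T (A + L)|)%N.
  apply: leq_trans (subset_leq_card cover) _; apply: leq_trans (leq_card_setU _ _) _.
  exact: leq_add (almost_t F0 famF0) (leq_card_bigcup _ _).
rewrite -(ler_nat rat) natrD natr_sum in card_le.
apply: le_trans card_le _; rewrite lerD2l.
have card_Ls : (#|Ls|%:R : rat) = gbin q (k - t + 1) 1.
  by rewrite card_vspaces_between1 ?sub0v // dimv0 subn0 dimZ.
rewrite -card_Ls mulr_natl -sumr_const.
apply: ler_sum => L; rewrite inE => /andP[/andP[_ sLZ] /eqP dimL].
apply: boundB; first exact: addvSl.
rewrite dimv_disjoint_sum ?dimL ?dimv0 ?addn1 //.
by apply/eqP; rewrite -subv0 -capAZ capvS.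
Qed.

Lemma card_fam_minus_T_A_le_gbin k fam T B :
  (forall X, X \in fam -> \dim X = k) -> (\dim B <= k)%N ->
  #|fam_minus_T_A fam T B|%:R <= gbin q (\dim (fullv : {vspace vT}) - \dim B) (k - \dim B).
Proof.
move=> dim_fam dimB; rewrite -card_vspaces_between ?subvf // ler_nat.
apply/subset_leq_card/subsetP => X; rewrite !inE => /and3P[famX _ sBX].
by rewrite sBX subvf (dim_fam X famX) (subnKC dimB) eqxx.
Qed.

End Families.

Section UniqueCover.
Variables (F : finFieldType) (vT : vectType F) (k t : nat).
Variables (fam : {set {vspace vT}}) (T : {vspace vT}).
Hypothesis t_lt_k : (t < k)%N.
Hypothesis dim_fam : forall X, X \in fam -> \dim X = k.
Hypothesis almost_t : almost_t_intersecting t fam.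
Hypothesis tau_lt_k : (tau t fam < k)%N.
Hypothesis T_unique :
  forall W : {vspace vT}, t_cover t fam W -> \dim W = tau t fam -> W = T.

Local Notation q := #|F|.
Local Notation c := (gbin q (k - t + 1) 1).
Local Notation G :=
  (gbin q (\dim (fullv : {vspace vT}) - tau t fam - 1) (k - tau t fam - 1)).

Lemma not_t_cover A : (\dim A <= tau t fam)%N -> A != T -> ~~ t_cover t fam A.
Proof.
move=> dimA; apply: contraNN => coverA; apply/eqP/T_unique => //.
by apply/eqP; rewrite eqn_leq dimA tau_min.
Qed.

Lemma card_fam_minus_T_A_iter a A : (\dim A + a = (tau t fam).+1)%N ->
  #|fam_minus_T_A fam T A|%:R <= iter a (fun x => 1 + c * x) G.
Proof.
elim: a A => [|a IHa] A dimA.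
  rewrite addn0 in dimA; rewrite /= -!subnDA addn1 -dimA.
  by apply: card_fam_minus_T_A_le_gbin; rewrite // dimA.
have [-> | A_neq_T] := eqVneq A T.
  suff -> : fam_minus_T_A fam T T = set0.
    have c_ge0 : 0 <= c := gbin_ge0 (finNzRing_gt1 F) _ _.
    have G_ge0 : 0 <= G := gbin_ge0 (finNzRing_gt1 F) _ _.
    rewrite cards0 iter_affine addr_ge0 ?mulr_ge0 ?exprn_ge0 //.
    by apply: sumr_ge0 => i _; exact: exprn_ge0.
  by apply/setP => X; rewrite !inE andNb andbF.
apply: card_fam_minus_T_A_rec => //; first by apply: not_t_cover A_neq_T; lia.
by move=> B sAB dimB; apply: IHa; lia.
Qed.

End UniqueCover.

Theorem lemma5p1 (F : finFieldType) (vT : vectType F) (n k t : nat)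
  (fam : {set {vspace vT}}) (T A : {vspace vT}) :
  (0 < n)%N -> (0 < k)%N -> (0 < t)%N -> (t.+1 <= k)%N -> (2 * k <= n)%N ->
  \dim (fullv : {vspace vT}) = n ->
  (forall X, X \in fam -> \dim X = k) ->
  almost_t_intersecting t fam ->
  (tau t fam < k)%N ->
  t_cover t fam T -> \dim T = tau t fam ->
  (forall W : {vspace vT}, t_cover t fam W -> \dim W = tau t fam -> W = T) ->
  (\dim A < tau t fam)%N -> (t <= \dim (A :&: T)%VS)%N ->
  (#|fam_minus_T_A fam T A|%:R : rat) <=
    gbin #|F| (k - t + 1) 1 ^+ (tau t fam - \dim A + 1)
      * gbin #|F| (n - tau t fam - 1) (k - tau t fam - 1)
    + \sum_(i < (tau t fam - \dim A).+1) gbin #|F| (k - t + 1) 1 ^+ i.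
Proof.
move=> _ _ _ t_lt_k _ dimV dim_fam almost_t tau_lt_k _ _ T_unique dimA _.
rewrite -dimV -[(tau t fam - \dim A).+1]addn1 -iter_affine.
by apply: card_fam_minus_T_A_iter => //; lia.
Qed.
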